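(* Let $R$ be a set and let $\mathcal{G}:(\mathbf{1},R)\rightarrow(Y,R)$ be an object of $\mathrm{2Open}_R$ with strategy set $\Sigma_\mathcal{G}$. The mapping $F_\mathcal{G}\mathcal{H}=(Y\rightarrow\mathcal{H})\circ\mathcal{G}$ defines a functor $F_\mathcal{G}:\mathrm{2Open}_R\rightarrow\mathrm{2Open}_R$.
   Context: Fix a set $R$. The objects of $\mathrm{2Open}_R$ are (state-free, coutility-free) open games $\mathcal{G}:(\mathbf{1},R)\rightarrow(Y,R)$, each consisting of a set $\Sigma_\mathcal{G}$ of strategies, a set $Y$ of moves, a play function $P_\mathcal{G}:\Sigma_\mathcal{G}\rightarrow Y$, an equilibrium function $E_\mathcal{G}:(Y\rightarrow R)\rightarrow\mathcal{P}\Sigma_\mathcal{G}$, and the coutility function $C_\mathcal{G}\,\sigma\,r=r$. A morphism $\alpha:\mathcal{G}\rightarrow\mathcal{G}'$ between such games (with data $\Sigma,Y,P,E$ and $\Sigma',Y',P',E'$) is a pair of functions $\alpha_Y:Y\rightarrow Y'$, $\alpha_\Sigma:\Sigma\rightarrow\Sigma'$ such that (i) $\alpha_Y(P\sigma)=P'(\alpha_\Sigma\sigma)$ for all $\sigma\in\Sigma$, and (ii) for all $\sigma\in\Sigma$ and $k:Y'\rightarrow R$, if $\sigma\in E(k\circ\alpha_Y)$ then $\alpha_\Sigma(\sigma)\in E'(k)$; composition is componentwise. For an object $\mathcal{H}$ (data $\Sigma_\mathcal{H},Y_\mathcal{H},P_\mathcal{H},E_\mathcal{H}$), the composite game $F_\mathcal{G}\mathcal{H}=(Y\rightarrow\mathcal{H})\circ\mathcal{G}:(\mathbf{1},R)\rightarrow(Y\times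 Y_\mathcal{H},R)$ (conditioning $\mathcal{H}$ on every move $y\in Y$ and composing sequentially after $\mathcal{G}$) is explicitly: strategies $\Sigma_\mathcal{G}\times(Y\rightarrow\Sigma_\mathcal{H})$; moves $Y\times Y_\mathcal{H}$; play $P(\sigma,f)=(P_\mathcal{G}\sigma,\,P_\mathcal{H}(f(P_\mathcal{G}\sigma)))$; coutility the identity; and for $k:Y\times Y_\mathcal{H}\rightarrow R$, $(\sigma,f)\in E_{F_\mathcal{G}\mathcal{H}}(k)$ iff $\sigma\in E_\mathcal{G}(\lambda y.\,k(y,P_\mathcal{H}(f\,y)))$ and for all $y'\in Y$, $f(y')\in E_\mathcal{H}(\lambda z.\,k(y',z))$. On a morphism $\alpha:\mathcal{H}\rightarrow\mathcal{H}'$, $F_\mathcal{G}(\alpha)$ is given by $(F_\mathcal{G}\alpha)_\Sigma(\sigma,f)=(\sigma,\alpha_\Sigma\circ f)$ and $(F_\mathcal{G}\alpha)_Y(y,z)=(y,\alpha_Y z)$. *)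

Set Implicit Arguments.

(* Objects of 2Open_R: state-free, coutility-free open games (1,R) -> (Y,R).
   The coutility is the identity C sigma r = r, so it carries no data and is
   not stored. Subsets P Sigma are represented as predicates Sigma -> Prop. *)
Record game (R : Type) : Type := Game {
  strat : Type;
  moves : Type;
  play  : strat -> moves;
  equil : (moves -> R) -> strat -> Prop
}.

Definition is_morphism (R : Type) (G G' : game R)
    (aY : moves G -> moves G') (aS : strat G -> strat G') : Prop :=
  (forall s : strat G, aY (play G s) = play G' (aS s)) /\
  (forall (s : strat G) (k : moves G' -> R),
      equil G (fun y => k (aY y)) s -> equil G' k (aS s)).

Record hom (R : Type) (G G' : game R) : Type := Hom {
  homY : moves G -> moves G';
  homS : strat G -> strat G';
  homP : is_morphism G G' homY homS
}.

Definition id_hom (R : Type) (G : game R) : hom G G.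
Proof.
  refine (@Hom R G G (fun y => y) (fun s => s) _).
  split; [ intros s; reflexivity | intros s k H; exact H ].
Defined.

Definition comp_hom (R : Type) (G1 G2 G3 : game R)
    (b : hom G2 G3) (a : hom G1 G2) : hom G1 G3.
Proof.
  refine (@Hom R G1 G3 (fun y => homY b (homY a y)) (fun s => homS b (homS a s)) _).
  destruct (homP a) as [a1 a2]; destruct (homP b) as [b1 b2].
  split.
  - intros s. rewrite a1. apply b1.
  - intros s k H. apply b2. apply a2. exact H.
Defined.

Definition F_obj (R : Type) (G H : game R) : game R :=
  @Game R
    (strat G * (moves G -> strat H))%type
    (moves G * moves H)%type
    (fun sf => (play G (fst sf), play H (snd sf (play G (fst sf)))))
    (fun k sf =>
       equil G (fun y => k (y, play H (snd sf y))) (fst sf) /\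
       (forall y' : moves G, equil H (fun z => k (y', z)) (snd sf y'))).

Definition F_mapS (R : Type) (G H H' : game R) (a : hom H H')
    : strat (F_obj G H) -> strat (F_obj G H') :=
  fun sf => (fst sf, fun y => homS a (snd sf y)).

Definition F_mapY (R : Type) (G H H' : game R) (a : hom H H')
    : moves (F_obj G H) -> moves (F_obj G H') :=
  fun yz => (fst yz, homY a (snd yz)).

Arguments F_mapS {R} G {H H'} a _.
Arguments F_mapY {R} G {H H'} a _.

From Stdlib Require Import FunctionalExtensionality.

(* F_G only touches the second component. Play is preserved because alpha
   preserves play. Of the two equilibrium conditions of the composite game,
   the one for G only sees the payoff y |-> k (y, P_H (f y)), which alpha
   leaves unchanged because it preserves play; the one for each copy of H is
   condition (ii) for alpha. *)

Lemma equil_ext {R : Type} {G : game R} {k k' : moves G -> R} {s : strat G} :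
  (forall y, k y = k' y) -> equil G k s -> equil G k' s.
Proof.
  intros Hk E. replace k' with k; [exact E | now apply functional_extensionality].
Qed.

Section CompositeFunctor.

Variables (R : Type) (G : game R).

Lemma F_mapY_play (H H' : game R) (a : hom H H') (sf : strat (F_obj G H)) :
  F_mapY G a (play (F_obj G H) sf) = play (F_obj G H') (F_mapS G a sf).
Proof.
  destruct sf as [s f]. unfold F_mapY, F_mapS; simpl.
  now rewrite (proj1 (homP a)).
Qed.

Lemma F_mapS_equil (H H' : game R) (a : hom H H')
    (k : moves (F_obj G H') -> R) (sf : strat (F_obj G H)) :
  equil (F_obj G H) (fun yz => k (F_mapY G a yz)) sf ->
  equil (F_obj G H') k (F_mapS G a sf).
Proof.
  destruct sf as [s f], (homP a) as [a_play a_equil].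
  intros [EG EH]; simpl in *. split.
  - refine (equil_ext _ EG). intro y. unfold F_mapY; simpl. now rewrite a_play.
  - intro y. apply a_equil, EH.
Qed.

Lemma F_map_is_morphism (H H' : game R) (a : hom H H') :
  is_morphism (F_obj G H) (F_obj G H') (F_mapY G a) (F_mapS G a).
Proof.
  split; [apply F_mapY_play | intros sf k; apply F_mapS_equil].
Qed.

Lemma F_mapY_id (H : game R) : F_mapY G (id_hom H) = (fun yz => yz).
Proof.
  apply functional_extensionality. now intros [y z].
Qed.

Lemma F_mapS_id (H : game R) : F_mapS G (id_hom H) = (fun sf => sf).
Proof.
  apply functional_extensionality. now intros [s f].
Qed.

Lemma F_mapY_comp (H1 H2 H3 : game R) (a : hom H1 H2) (b : hom H2 H3) :
  F_mapY G (comp_hom b a) = (fun yz => F_mapY G b (F_mapY G a yz)).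
Proof. reflexivity. Qed.

Lemma F_mapS_comp (H1 H2 H3 : game R) (a : hom H1 H2) (b : hom H2 H3) :
  F_mapS G (comp_hom b a) = (fun sf => F_mapS G b (F_mapS G a sf)).
Proof. reflexivity. Qed.

End CompositeFunctor.

Theorem theorem6 (R : Type) (G : game R) :
  (forall (H H' : game R) (a : hom H H'),
      is_morphism (F_obj G H) (F_obj G H') (F_mapY G a) (F_mapS G a)) /\
  (forall H : game R,
      F_mapY G (id_hom H) = (fun yz => yz) /\
      F_mapS G (id_hom H) = (fun sf => sf)) /\
  (forall (H1 H2 H3 : game R) (a : hom H1 H2) (b : hom H2 H3),
      F_mapY G (comp_hom b a) = (fun yz => F_mapY G b (F_mapY G a yz)) /\
      F_mapS G (comp_hom b a) = (fun sf => F_mapS G b (F_mapS G a sf))).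
Proof.
  split; [|split].
  - apply F_map_is_morphism.
  - intro H. split; [apply F_mapY_id | apply F_mapS_id].
  - intros H1 H2 H3 a b. split; [apply F_mapY_comp | apply F_mapS_comp].
Qed.
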